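(* Let $\mathcal T$ be the topograph of a binary quadratic form of discriminant $D$, and let $V$ be a vertex of $\mathcal T$ with adjacent region labels $r,s,t$ (nonzero), where the edge between the regions labelled $r$ and $t$ is oriented into $V$ with label $e=s-r-t$, and the other two edges are oriented out of $V$: the edge between $r$ and $s$ with label $f=r+s-t$ and the edge between $s$ and $t$ with label $g=s+t-r$. If $D<0$, then for suitable branches of $\arcsin$ and $\arctan$, \[ \arcsin\!\Big(\tfrac{e}{rt}\cdot\tfrac{\sqrt{-D}}{2}\Big)=\arcsin\!\Big(\tfrac{f}{rs}\cdot\tfrac{\sqrt{-D}}{2}\Big)+\arcsin\!\Big(\tfrac{g}{st}\cdot\tfrac{\sqrt{-D}}{2}\Big),\qquad \arctan\!\Big(\tfrac{\sqrt{-D}}{e}\Big)=\arctan\!\Big(\tfrac{\sqrt{-D}}{f}\Big)+\arctan\!\Big(\tfrac{\sqrt{-D}}{g}\Big). \] If $D>0$, then \[ \operatorname{arcsinh}\!\Big(\tfrac{e}{rt}\cdot\tfrac{\sqrt{D}}{2}\Big)=\operatorname{arcsinh}\!\Big(\tfrac{f}{rs}\cdot\tfrac{\sqrt{D}}{2}\Big)+\operatorname{arcsinh}\!\Big(\tfrac{g}{st}\cdot\tfrac{\sqrt{D}}{2}\Big),\qquad \operatorname{arctanh}\!\Big(\tfrac{\sqrt{D}}{e}\Big)=\operatorname{arctanh}\!\Big(\tfrac{\sqrt{D}}{f}\Big)+\operatorname{arctanh}\!\Big(\tfrac{\sqrt{D}}{g}\Big). \]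
   Context: The topograph of a binary quadratic form $q$: a planar trivalent tree whose vertices are superbases $\{v_1,v_2,v_3\}$ of $\mathbb Z^2$ ($v_1+v_2+v_3=0$, $\{v_1,v_2\}$ a basis, up to overall sign), whose complementary regions correspond to pairs $\pm v$ of primitive vectors labelled $q(v)$. At a vertex, the label of an edge oriented outward between regions labelled $x,y$, with third region at the vertex labelled $z$, is $x+y-z$; reversing orientation negates the label. The discriminant $D$ of $q$ equals $-(e'f'+f'g'+g'e')$ where $e',f',g'$ are the three outgoing edge labels at any vertex. *)

From Stdlib Require Import Reals ZArith.
From Coquelicot Require Import Coquelicot.

Definition qform (a b c : Z) (x y : Z) : Z := (a * x * x + b * x * y + c * y * y)%Z.

Definition bqf_disc (a b c : Z) : Z := (b * b - 4 * a * c)%Z.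

(* (x1,y1), (x2,y2) is a basis of Z^2; together with v3 = -(v1+v2) it forms a
   superbase {v1,v2,v3}, i.e. a vertex of the topograph. *)
Definition is_basis (x1 y1 x2 y2 : Z) : Prop :=
  (x1 * y2 - x2 * y1)%Z = 1%Z \/ (x1 * y2 - x2 * y1)%Z = (-1)%Z.

(* A (real) branch value of arctan(y/x): an angle th with tan th = y/x; when
   x = 0 the value y/x is infinite and th must satisfy cos th = 0. *)
Definition arctan_branch (y x th : R) : Prop :=
  (x <> 0%R -> cos th <> 0%R /\ tan th = (y / x)%R) /\ (x = 0%R -> cos th = 0%R).

Definition Cexp (z : C) : C :=
  (exp (Re z) * cos (Im z), exp (Re z) * sin (Im z))%R.
Definition Csinh (z : C) : C := ((Cexp z - Cexp (- z)) / 2)%C.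
Definition Ccosh (z : C) : C := ((Cexp z + Cexp (- z)) / 2)%C.

Definition arcsinh_branch (u : R) (w : C) : Prop := Csinh w = RtoC u.

(* A (complex) branch value of arctanh(y/x): any w with tanh w = y/x; when
   x = 0 the value is infinite, i.e. cosh w = 0. *)
Definition arctanh_branch (y x : R) (w : C) : Prop :=
  (x <> 0%R -> Ccosh w <> RtoC 0 /\ Csinh w = (RtoC (y / x) * Ccosh w)%C) /\
  (x = 0%R -> Ccosh w = RtoC 0).

(* The superbase has determinant +-1, so D = r^2 + s^2 + t^2 - 2(rs + st + tr); hence
   D = f^2 - 4rs = g^2 - 4st = e^2 - 4rt, and since f + g = 2s and fg + D = 2se, every j
   with j^2 = D satisfies (f + j)(g + j) = 2s(e + j).  Write m for the product rt, rs or st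
   attached to x = e, f or g, so that x^2 - D = 4m.
   For D < 0 take j = i sqrt(-D): the polar angles of (f, sqrt(-D)) and (g, sqrt(-D)) add
   up to one of (e, sqrt(-D)), which is the arctan identity.  Doubling gives the arcsin
   identity, since a polar angle phi of (x, y) has sin 2phi = 2xy/(x^2 + y^2) = xy/(2m).
   For D > 0 take j = sqrt D: the identity for j and -j makes the ratio (x + j)/(x - j)
   multiplicative in the same way, and any z with exp(2z) equal to this ratio satisfies
   tanh z = j/x and sinh 2z = xj/(2m). *)
From Stdlib Require Import Reals ZArith Lra Psatz.
From Coquelicot Require Import Coquelicot.

Open Scope R_scope.

Lemma unit_circle_angle x y : x*x + y*y = 1 -> exists phi, cos phi = x /\ sin phi = y.
Proof.
intros Hxy. assert (Hx : -1 <= x <= 1) by nra.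
destruct (Rle_or_lt 0 y) as [Hy|Hy].
- exists (acos x). rewrite cos_acos, sin_acos by exact Hx. split; [reflexivity|].
  replace (1 - x²) with (y*y) by (unfold Rsqr; lra). apply sqrt_square; exact Hy.
- exists (- acos x). rewrite cos_neg, sin_neg, cos_acos, sin_acos by exact Hx.
  split; [reflexivity|].
  replace (1 - x²) with ((-y)*(-y)) by (unfold Rsqr; lra). rewrite sqrt_square; lra.
Qed.

Lemma polar_angle x y : 0 < x*x + y*y ->
  exists phi l, 0 < l /\ cos phi = l*x /\ sin phi = l*y.
Proof.
intros Hpos. set (rho := sqrt (x*x + y*y)).
assert (Hrho : 0 < rho) by (apply sqrt_lt_R0; exact Hpos).
assert (Hrho2 : rho*rho = x*x + y*y) by (apply sqrt_sqrt; lra).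
destruct (unit_circle_angle (x/rho) (y/rho)) as [phi [Hc Hs]].
{ transitivity ((x*x + y*y)/(rho*rho)); [field; lra|]. rewrite Hrho2. field; lra. }
exists phi, (/rho). split; [apply Rinv_0_lt_compat; exact Hrho|].
rewrite Hc, Hs. split; unfold Rdiv; ring.
Qed.

Lemma polar_angle_plus x y x' y' phi psi l l' :
  cos phi = l*x -> sin phi = l*y -> cos psi = l'*x' -> sin psi = l'*y' ->
  cos (phi + psi) = l*l'*(x*x' - y*y') /\ sin (phi + psi) = l*l'*(x*y' + y*x').
Proof.
intros Hc Hs Hc' Hs'. rewrite cos_plus, sin_plus, Hc, Hs, Hc', Hs'. split; ring.
Qed.

Lemma arctan_branch_polar x y phi l : l <> 0 ->
  cos phi = l*x -> sin phi = l*y -> arctan_branch y x phi.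
Proof.
intros Hl Hc Hs. split.
- intros Hx. rewrite Hc. split.
  + apply Rmult_integral_contrapositive_currified; assumption.
  + unfold tan. rewrite Hc, Hs. field. split; assumption.
- intros Hx. rewrite Hc, Hx. ring.
Qed.

Lemma sin_double_polar x y phi l :
  cos phi = l*x -> sin phi = l*y -> sin (2*phi) = 2*x*y/(x*x + y*y).
Proof.
intros Hc Hs.
assert (Hl : l*l*(x*x + y*y) = 1).
{ rewrite <- (sin2_cos2 phi), Hc, Hs. unfold Rsqr. ring. }
assert (Hxy : x*x + y*y <> 0) by (intro E; rewrite E, Rmult_0_r in Hl; lra).
rewrite sin_2a, Hc, Hs.
transitivity (2*x*y*(l*l*(x*x + y*y))/(x*x + y*y)); [field; exact Hxy|].
rewrite Hl, Rmult_1_r. reflexivity.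
Qed.

Lemma RtoC_neq0 x : x <> 0 -> RtoC x <> 0%C.
Proof. intros Hx E. apply Hx, RtoC_inj, E. Qed.

Lemma Cexp_0 : Cexp 0 = 1%C.
Proof.
unfold Cexp. simpl. rewrite exp_0, cos_0, sin_0.
apply injective_projections; simpl; ring.
Qed.

Lemma Cexp_add z w : Cexp (z + w) = (Cexp z * Cexp w)%C.
Proof.
destruct z as [x y], w as [x' y']. unfold Cexp, Cmult, Cplus. simpl.
rewrite exp_plus, cos_plus, sin_plus. f_equal; ring.
Qed.

Lemma Cexp_neq0 z : Cexp z <> 0%C.
Proof.
intros Hz. apply C1_nz.
transitivity (Cexp (z + - z)); [rewrite Cplus_opp_r, Cexp_0; reflexivity|].
rewrite Cexp_add, Hz. apply Cmult_0_l.
Qed.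

Lemma Cexp_opp z : Cexp (- z) = (/ Cexp z)%C.
Proof.
assert (Hinv : (Cexp (- z) * Cexp z)%C = 1%C)
  by (rewrite <- Cexp_add, Cplus_comm, Cplus_opp_r; exact Cexp_0).
transitivity (Cexp (- z) * Cexp z / Cexp z)%C; [field; exact (Cexp_neq0 z)|].
rewrite Hinv. apply Cmult_1_l.
Qed.

Lemma Cexp_surj (p : C) : p <> 0%C -> exists z, Cexp z = p.
Proof.
destruct p as [u v]. intros Hp.
assert (Hpos : 0 < u*u + v*v).
{ destruct (Rlt_or_le 0 (u*u + v*v)) as [H|H]; [exact H|].
  exfalso. apply Hp, injective_projections; simpl; nra. }
destruct (polar_angle u v Hpos) as [phi [l [Hl [Hc Hs]]]].
exists (ln (/l), phi). unfold Cexp. simpl.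
rewrite exp_ln by (apply Rinv_0_lt_compat; exact Hl).
rewrite Hc, Hs. f_equal; field; lra.
Qed.

Lemma Cexp_sqr_surj q : q <> 0 -> exists z, (Cexp z * Cexp z)%C = RtoC q.
Proof.
intros Hq. destruct (Cexp_surj (RtoC q) (RtoC_neq0 q Hq)) as [w Hw].
exists (w / 2)%C. rewrite <- Cexp_add, <- Hw. f_equal. field.
Qed.

Lemma Csinh_Cexp z : Csinh z = ((Cexp z * Cexp z - 1) / (2 * Cexp z))%C.
Proof.
unfold Csinh. rewrite Cexp_opp. field. exact (Cexp_neq0 z).
Qed.

Lemma Ccosh_Cexp z : Ccosh z = ((Cexp z * Cexp z + 1) / (2 * Cexp z))%C.
Proof.
unfold Ccosh. rewrite Cexp_opp. field. exact (Cexp_neq0 z).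
Qed.

Lemma sqr_sub_neq0_factors x y : x*x - y*y <> 0 -> x - y <> 0 /\ x + y <> 0.
Proof.
intros Hxy. apply Rmult_neq_0_reg.
replace ((x - y)*(x + y)) with (x*x - y*y) by ring. exact Hxy.
Qed.

Lemma sum_div_diff_neq0 x y : x*x - y*y <> 0 -> (x + y)/(x - y) <> 0.
Proof.
intros Hxy. destruct (sqr_sub_neq0_factors _ _ Hxy) as [Hm Hp].
apply Rmult_integral_contrapositive_currified; [exact Hp|apply Rinv_neq_0_compat, Hm].
Qed.

Lemma arctanh_branch_Cexp_sqr y x z : x*x - y*y <> 0 ->
  (Cexp z * Cexp z)%C = RtoC ((x + y)/(x - y)) -> arctanh_branch y x z.
Proof.
intros Hxy Hz. destruct (sqr_sub_neq0_factors _ _ Hxy) as [Hm Hp].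
set (q := (x + y)/(x - y)) in Hz.
assert (Hsinh : Csinh z = (RtoC (q - 1) / (2 * Cexp z))%C)
  by (rewrite Csinh_Cexp, Hz, RtoC_minus; reflexivity).
assert (Hcosh : Ccosh z = (RtoC (q + 1) / (2 * Cexp z))%C)
  by (rewrite Ccosh_Cexp, Hz, RtoC_plus; reflexivity).
split.
- intros Hx. rewrite Hsinh, Hcosh. split.
  + intros E. apply (RtoC_neq0 (q + 1)).
    * unfold q. replace ((x + y)/(x - y) + 1) with (2*x/(x - y)) by (field; exact Hm).
      apply Rmult_integral_contrapositive_currified; [lra|apply Rinv_neq_0_compat, Hm].
    * transitivity (RtoC (q + 1) / (2 * Cexp z) * (2 * Cexp z))%C; [field; apply Cexp_neq0|].
      rewrite E. apply Cmult_0_l.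
  + replace (q - 1) with (y/x * (q + 1)) by (unfold q; field; split; assumption).
    rewrite RtoC_mult. unfold Cdiv. ring.
- intros Hx. rewrite Hcosh.
  replace (q + 1) with 0 by (unfold q; rewrite Hx; field; lra).
  unfold Cdiv. apply Cmult_0_l.
Qed.

Lemma arcsinh_branch_Cexp_sqr y x z : x*x - y*y <> 0 ->
  (Cexp z * Cexp z)%C = RtoC ((x + y)/(x - y)) ->
  arcsinh_branch (2*x*y/(x*x - y*y)) (z + z).
Proof.
intros Hxy Hz. unfold arcsinh_branch.
destruct (sqr_sub_neq0_factors _ _ Hxy) as [Hm Hp].
pose proof (sum_div_diff_neq0 _ _ Hxy) as Hq.
set (q := (x + y)/(x - y)) in Hz, Hq.
replace (2*x*y/(x*x - y*y)) with ((q*q - 1)/(2*q))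
  by (unfold q; field; repeat split; assumption).
rewrite Csinh_Cexp, Cexp_add, Hz, RtoC_div, RtoC_minus, !RtoC_mult by lra.
reflexivity.
Qed.

Section Vertex.

Variables r s t D : R.
Hypotheses (r_neq0 : r <> 0) (s_neq0 : s <> 0) (t_neq0 : t <> 0).
Hypothesis D_vertex : D = r*r + s*s + t*t - 2*r*s - 2*s*t - 2*r*t.

Local Notation e := (s - r - t).
Local Notation f := (r + s - t).
Local Notation g := (s + t - r).

Let rt_neq0 : r*t <> 0 := Rmult_integral_contrapositive_currified _ _ r_neq0 t_neq0.
Let rs_neq0 : r*s <> 0 := Rmult_integral_contrapositive_currified _ _ r_neq0 s_neq0.
Let st_neq0 : s*t <> 0 := Rmult_integral_contrapositive_currified _ _ s_neq0 t_neq0.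

Lemma vertex_disc_e : e*e - D = 4*(r*t).
Proof. rewrite D_vertex. ring. Qed.

Lemma vertex_disc_f : f*f - D = 4*(r*s).
Proof. rewrite D_vertex. ring. Qed.

Lemma vertex_disc_g : g*g - D = 4*(s*t).
Proof. rewrite D_vertex. ring. Qed.

Lemma vertex_mul : f*g + D = 2*s*e.
Proof. rewrite D_vertex. ring. Qed.

Lemma vertex_circle : D < 0 ->
  (exists th1 th2 th3 : R,
     sin th1 = e/(r*t)*(sqrt (-D)/2) /\
     sin th2 = f/(r*s)*(sqrt (-D)/2) /\
     sin th3 = g/(s*t)*(sqrt (-D)/2) /\ th1 = th2 + th3) /\
  (exists ph1 ph2 ph3 : R,
     arctan_branch (sqrt (-D)) e ph1 /\
     arctan_branch (sqrt (-D)) f ph2 /\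
     arctan_branch (sqrt (-D)) g ph3 /\ ph1 = ph2 + ph3).
Proof.
intros HD. set (k := sqrt (-D)).
assert (Hk2 : k*k = -D) by (apply sqrt_sqrt; lra).
assert (Hpos : forall x, 0 < x*x + k*k)
  by (intros x; pose proof (Rle_0_sqr x); unfold Rsqr in *; lra).
destruct (polar_angle f k (Hpos f)) as [phf [lf [Hlf [Hcf Hsf]]]].
destruct (polar_angle g k (Hpos g)) as [phg [lg [Hlg [Hcg Hsg]]]].
assert (Hle : 2*s*lf*lg <> 0).
{ repeat apply Rmult_integral_contrapositive_currified; lra. }
assert (Hce : cos (phf + phg) = 2*s*lf*lg * e).
{ rewrite (proj1 (polar_angle_plus _ _ _ _ _ _ _ _ Hcf Hsf Hcg Hsg)), Hk2.
  transitivity (lf*lg*(f*g + D)); [ring|]. rewrite vertex_mul. ring. }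
assert (Hse : sin (phf + phg) = 2*s*lf*lg * k).
{ rewrite (proj2 (polar_angle_plus _ _ _ _ _ _ _ _ Hcf Hsf Hcg Hsg)). ring. }
assert (sin_double : forall x m phi l, m <> 0 -> x*x - D = 4*m ->
          cos phi = l*x -> sin phi = l*k -> sin (2*phi) = x/m*(k/2)).
{ intros x m phi l Hm Hx Hc Hs. rewrite (sin_double_polar _ _ _ _ Hc Hs), Hk2.
  replace (x*x + -D) with (4*m) by lra. field. exact Hm. }
split.
- exists (2*(phf + phg)), (2*phf), (2*phg).
  split; [|split; [|split]].
  + exact (sin_double _ _ _ _ rt_neq0 vertex_disc_e Hce Hse).
  + exact (sin_double _ _ _ _ rs_neq0 vertex_disc_f Hcf Hsf).
  + exact (sin_double _ _ _ _ st_neq0 vertex_disc_g Hcg Hsg).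
  + ring.
- exists (phf + phg), phf, phg.
  split; [|split; [|split]].
  + exact (arctan_branch_polar _ _ _ _ Hle Hce Hse).
  + exact (arctan_branch_polar _ _ _ _ (Rgt_not_eq _ _ Hlf) Hcf Hsf).
  + exact (arctan_branch_polar _ _ _ _ (Rgt_not_eq _ _ Hlg) Hcg Hsg).
  + reflexivity.
Qed.

Lemma vertex_mul_conj j : j*j = D ->
  (f + j)*(g + j) = 2*s*(e + j) /\ (f - j)*(g - j) = 2*s*(e - j).
Proof.
intros Hj. split.
- transitivity (f*g + j*j + j*(f + g)); [ring|]. rewrite Hj, vertex_mul. ring.
- transitivity (f*g + j*j - j*(f + g)); [ring|]. rewrite Hj, vertex_mul. ring.
Qed.

Lemma vertex_sqr_sub_neq0 j : j*j = D ->
  e*e - j*j <> 0 /\ f*f - j*j <> 0 /\ g*g - j*j <> 0.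
Proof.
intros Hj. rewrite Hj, vertex_disc_e, vertex_disc_f, vertex_disc_g.
repeat split; apply Rmult_integral_contrapositive_currified; lra.
Qed.

Lemma vertex_ratio_mul j : j*j = D ->
  (f + j)/(f - j) * ((g + j)/(g - j)) = (e + j)/(e - j).
Proof.
intros Hj. destruct (vertex_mul_conj j Hj) as [Hplus Hminus].
destruct (vertex_sqr_sub_neq0 j Hj) as [He [Hf Hg]].
destruct (sqr_sub_neq0_factors _ _ He) as [He_m _].
destruct (sqr_sub_neq0_factors _ _ Hf) as [Hf_m Hf_p].
destruct (sqr_sub_neq0_factors _ _ Hg) as [Hg_m Hg_p].
transitivity ((f + j)*(g + j)/((f - j)*(g - j))); [field; split; assumption|].
rewrite Hplus, Hminus. field. split; assumption.
Qed.

Lemma vertex_hyperbolic : 0 < D ->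
  (exists w1 w2 w3 : C,
     arcsinh_branch (e/(r*t)*(sqrt D/2)) w1 /\
     arcsinh_branch (f/(r*s)*(sqrt D/2)) w2 /\
     arcsinh_branch (g/(s*t)*(sqrt D/2)) w3 /\ w1 = (w2 + w3)%C) /\
  (exists z1 z2 z3 : C,
     arctanh_branch (sqrt D) e z1 /\
     arctanh_branch (sqrt D) f z2 /\
     arctanh_branch (sqrt D) g z3 /\ z1 = (z2 + z3)%C).
Proof.
intros HD. set (k := sqrt D).
assert (Hk2 : k*k = D) by (apply sqrt_sqrt; lra).
destruct (vertex_sqr_sub_neq0 k Hk2) as [He [Hf Hg]].
destruct (Cexp_sqr_surj _ (sum_div_diff_neq0 _ _ Hf)) as [zf Hzf].
destruct (Cexp_sqr_surj _ (sum_div_diff_neq0 _ _ Hg)) as [zg Hzg].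
assert (Hze : (Cexp (zf + zg) * Cexp (zf + zg))%C = RtoC ((e + k)/(e - k))).
{ rewrite <- (vertex_ratio_mul k Hk2), RtoC_mult, <- Hzf, <- Hzg, Cexp_add. ring. }
assert (sinh_double : forall x m z, m <> 0 -> x*x - D = 4*m ->
          (Cexp z * Cexp z)%C = RtoC ((x + k)/(x - k)) -> arcsinh_branch (x/m*(k/2)) (z + z)).
{ intros x m z Hm Hx Hz.
  replace (x/m*(k/2)) with (2*x*k/(x*x - k*k)) by (rewrite Hk2, Hx; field; exact Hm).
  apply arcsinh_branch_Cexp_sqr; [|exact Hz].
  rewrite Hk2, Hx. apply Rmult_integral_contrapositive_currified; [lra|exact Hm]. }
split.
- exists (zf + zg + (zf + zg))%C, (zf + zf)%C, (zg + zg)%C.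
  split; [|split; [|split]].
  + exact (sinh_double _ _ _ rt_neq0 vertex_disc_e Hze).
  + exact (sinh_double _ _ _ rs_neq0 vertex_disc_f Hzf).
  + exact (sinh_double _ _ _ st_neq0 vertex_disc_g Hzg).
  + ring.
- exists (zf + zg)%C, zf, zg.
  split; [|split; [|split]].
  + exact (arctanh_branch_Cexp_sqr _ _ _ He Hze).
  + exact (arctanh_branch_Cexp_sqr _ _ _ Hf Hzf).
  + exact (arctanh_branch_Cexp_sqr _ _ _ Hg Hzg).
  + reflexivity.
Qed.

End Vertex.

Close Scope R_scope.

Lemma bqf_disc_vertex (a b c x1 y1 x2 y2 : Z) : is_basis x1 y1 x2 y2 ->
  let r := qform a b c x1 y1 in
  let s := qform a b c x2 y2 in
  let t := qform a b c (- (x1 + x2)) (- (y1 + y2)) in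
  bqf_disc a b c = (r*r + s*s + t*t - 2*r*s - 2*s*t - 2*r*t)%Z.
Proof.
intros Hb r s t. unfold r, s, t, qform, bqf_disc.
assert (Hdet : ((x1*y2 - x2*y1) * (x1*y2 - x2*y1) = 1)%Z)
  by (destruct Hb as [-> | ->]; reflexivity).
transitivity ((x1*y2 - x2*y1) * (x1*y2 - x2*y1) * (b*b - 4*a*c))%Z;
  [rewrite Hdet; ring|ring].
Qed.

Theorem lemma2 (a b c x1 y1 x2 y2 : Z) :
  is_basis x1 y1 x2 y2 ->
  let r := qform a b c x1 y1 in
  let s := qform a b c x2 y2 in
  let t := qform a b c (- (x1 + x2))%Z (- (y1 + y2))%Z in
  let D := bqf_disc a b c in
  let e := (s - r - t)%Z in
  let f := (r + s - t)%Z in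
  let g := (s + t - r)%Z in
  r <> 0%Z -> s <> 0%Z -> t <> 0%Z ->
  ((D < 0)%Z ->
     (exists th1 th2 th3 : R,
        sin th1 = (IZR e / (IZR r * IZR t) * (sqrt (IZR (- D)) / 2))%R /\
        sin th2 = (IZR f / (IZR r * IZR s) * (sqrt (IZR (- D)) / 2))%R /\
        sin th3 = (IZR g / (IZR s * IZR t) * (sqrt (IZR (- D)) / 2))%R /\
        th1 = (th2 + th3)%R) /\
     (exists ph1 ph2 ph3 : R,
        arctan_branch (sqrt (IZR (- D))) (IZR e) ph1 /\
        arctan_branch (sqrt (IZR (- D))) (IZR f) ph2 /\
        arctan_branch (sqrt (IZR (- D))) (IZR g) ph3 /\
        ph1 = (ph2 + ph3)%R)) /\
  ((0 < D)%Z ->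
     (exists w1 w2 w3 : C,
        arcsinh_branch (IZR e / (IZR r * IZR t) * (sqrt (IZR D) / 2))%R w1 /\
        arcsinh_branch (IZR f / (IZR r * IZR s) * (sqrt (IZR D) / 2))%R w2 /\
        arcsinh_branch (IZR g / (IZR s * IZR t) * (sqrt (IZR D) / 2))%R w3 /\
        w1 = (w2 + w3)%C) /\
     (exists z1 z2 z3 : C,
        arctanh_branch (sqrt (IZR D)) (IZR e) z1 /\
        arctanh_branch (sqrt (IZR D)) (IZR f) z2 /\
        arctanh_branch (sqrt (IZR D)) (IZR g) z3 /\
        z1 = (z2 + z3)%C)).
Proof.
intros Hb. pose proof (bqf_disc_vertex a b c x1 y1 x2 y2 Hb) as HD.
cbv zeta in HD |- *. intros Hr Hs Ht.
apply (f_equal IZR) in HD. rewrite !minus_IZR, !plus_IZR, !mult_IZR in HD.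
rewrite !minus_IZR, !plus_IZR, !opp_IZR.
pose proof (not_0_IZR _ Hr) as Hr'. pose proof (not_0_IZR _ Hs) as Hs'.
pose proof (not_0_IZR _ Ht) as Ht'.
split; intros Hsign; apply IZR_lt in Hsign.
- exact (vertex_circle _ _ _ _ Hr' Hs' Ht' HD Hsign).
- exact (vertex_hyperbolic _ _ _ _ Hr' Hs' Ht' HD Hsign).
Qed.
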